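(* In the weighted picking sequence algorithm, for every step $s\in\{0,1,\ldots,m\}$ and all agents $i,j\in N$, $\left|\frac{t_i(s)}{w_i}-\frac{t_j(s)}{w_j}\right|\le\frac{1}{\min(w_i,w_j)}$. Moreover, for every step $s$ and every $i\in N$, $\left|t_i(s)-\frac{w_i}{W}\cdot s\right|\le\frac{w_i}{w_{\min}}$.
   Context: Agents $N=[n]$ with positive weights $w_i$, $W=\sum_iw_i$, $w_{\min}=\min_iw_i$; items $M=[m]$ with additive utilities. Weighted picking sequence algorithm: while items remain, an agent $i^*$ minimizing $t_i/w_i$ (ties broken arbitrarily), where $t_i$ is the number of items $i$ has picked so far, takes her most valued remaining item. Each iteration is a step; $t_i(s)$ is the number of items agent $i$ has picked in steps $1,\ldots,s$ (so $t_i(0)=0$). *)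

From mathcomp Require Import all_boot all_order all_algebra.
Set Implicit Arguments. Unset Strict Implicit. Unset Printing Implicit Defensive.
Import Order.TTheory GRing.Theory Num.Theory.
Local Open Scope ring_scope.

(* A run of the algorithm is the sequence of (picking agent, picked item)
   pairs, step 1 first. *)

Definition picks (N M : finType) (r : seq (N * M)) (i : N) (s : nat) : nat :=
  count (fun p => p.1 == i) (take s r).

Definition wsum (R : realFieldType) (N : finType) (w : N -> R) : R :=
  \sum_(k : N) w k.

(* w_min = minimum weight (0 if there are no agents, irrelevant case) *)
Definition wmin (R : realFieldType) (N : finType) (w : N -> R) : R :=
  if [pick k : N] is Some k0 then \big[Num.min/w k0]_(k : N) w k else 0.

(* r is a possible execution of the weighted picking sequence algorithm
   (with arbitrary tie-breaking) for weights w and additive utilities u: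
   it runs for exactly |M| steps (while items remain); at each step the
   picking agent a minimizes t_i/w_i, and takes a remaining item that she
   values most among the remaining items. *)
Definition wps_run (R : realFieldType) (N M : finType)
    (w : N -> R) (u : N -> M -> R) (r : seq (N * M)) : Prop :=
  size r = #|M| /\
  forall pre a x post, r = pre ++ (a, x) :: post ->
    [/\ forall j : N, (picks r a (size pre))%:R / w a
                      <= (picks r j (size pre))%:R / w j,
        x \notin map snd pre &
        forall y : M, y \notin map snd pre -> u a y <= u a x].

From mathcomp Require Import all_boot all_order all_algebra.
From mathcomp Require Import lra.
Set Implicit Arguments. Unset Strict Implicit. Unset Printing Implicit Defensive.
Import Order.TTheory GRing.Theory Num.Theory.
Local Open Scope ring_scope.

(* The invariant (t_i(s) - 1)/w_i <= t_j(s)/w_j holds at every step: the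
   ratio t_i/w_i only grows when i picks, and i picks only when her ratio is
   minimal, so just before that pick it was at most every other ratio.  Both
   bounds follow from the invariant alone: the first directly, the second by
   summing it over j, since the t_j(s) add up to s. *)

Lemma sum_count_fibers (T : Type) (I : finType) (f : T -> I) (s : seq T) :
  (\sum_(i : I) count (fun x => f x == i) s)%N = size s.
Proof.
elim: s => [|x s IHs] /=; first by rewrite big1.
rewrite big_split /= IHs (bigD1 (f x)) //= eqxx big1 // => i /negbTE.
by rewrite eq_sym => ->.
Qed.

Lemma split_at_size (T : Type) (r : seq T) (s : nat) : (s < size r)%N ->
  exists pre x post, r = pre ++ x :: post /\ size pre = s.
Proof.
move=> lt_s; have def_r := cat_take_drop s r.
case E: (drop s r) def_r => [|x post] def_r.
  by move/(congr1 size): E; rewrite size_drop => /eqP; rewrite subn_eq0 leqNgt lt_s.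
by exists (take s r), x, post; rewrite size_take lt_s.
Qed.

Section Picks.

Variables (N M : finType) (r : seq (N * M)).

Lemma sum_picks (s : nat) : (\sum_(i : N) picks r i s)%N = minn s (size r).
Proof. by rewrite sum_count_fibers size_take_min. Qed.

Lemma picks_cons pre a x post (i : N) : r = pre ++ (a, x) :: post ->
  picks r i (size pre).+1 = (picks r i (size pre) + (a == i))%N.
Proof.
move=> ->; rewrite /picks !take_cat ltnn ltnNge leqnSn /= subnn subSnn take0.
by rewrite cats0 count_cat /= take0 addn0.
Qed.

End Picks.

Section PickingRule.

Variables (R : realFieldType) (N M : finType) (w : N -> R) (r : seq (N * M)).
Hypothesis w_gt0 : forall i, 0 < w i.
Hypothesis picker_minimal : forall pre a x post, r = pre ++ (a, x) :: post ->
  forall j, (picks r a (size pre))%:R / w a <= (picks r j (size pre))%:R / w j.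

Lemma picks_balanced (s : nat) (i j : N) : (s <= size r)%N ->
  ((picks r i s)%:R - 1) / w i <= (picks r j s)%:R / w j.
Proof.
elim: s i j => [|s IHs] i j le_s.
  by rewrite /picks take0 /= mul0r sub0r mulNr mul1r oppr_le0 invr_ge0 ltW.
have [pre [[a x] [post [def_r size_pre]]]] := split_at_size le_s.
rewrite -size_pre !(picks_cons _ def_r) size_pre.
have t_j_le : (picks r j s)%:R / w j <= (picks r j s + (a == j))%:R / w j.
  by rewrite ler_pM2r ?invr_gt0 // ler_nat leq_addr.
apply: le_trans t_j_le; have [<-|_] := eqP.
  by rewrite natrD addrK -size_pre; apply: picker_minimal def_r j.
by rewrite addn0 IHs // ltnW.
Qed.

End PickingRule.

Section Weights.

Variables (R : realFieldType) (N : finType) (w : N -> R).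
Hypothesis w_gt0 : forall i, 0 < w i.

Lemma wmin_le (i : N) : wmin w <= w i.
Proof. by rewrite /wmin; case: pickP => [k _|/(_ i)//]; apply: bigmin_le. Qed.

Lemma wmin_gt0 (i : N) : 0 < wmin w.
Proof.
rewrite /wmin; case: pickP => [k _|/(_ i)//].
by apply: lt_bigmin => // j _; apply: w_gt0.
Qed.

Lemma wsum_gt0 (i : N) : 0 < wsum w.
Proof.
by rewrite /wsum (bigD1 i) //= ltr_pwDl ?sumr_ge0 // => j _; apply/ltW.
Qed.

End Weights.

Section BalancedShares.

Variables (R : realFieldType) (N : finType) (w t : N -> R).
Hypothesis w_gt0 : forall i, 0 < w i.
Hypothesis t_balanced : forall i j, (t i - 1) / w i <= t j / w j.

Lemma balanced_ratio_gap (i j : N) :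
  `|t i / w i - t j / w j| <= 1 / Num.min (w i) (w j).
Proof.
have gap k l : t k / w k - t l / w l <= 1 / Num.min (w k) (w l).
  have : 1 / w k <= 1 / Num.min (w k) (w l).
    by rewrite !mul1r lef_pV2 ?posrE ?lt_min ?w_gt0 // ge_min lexx.
  by have := t_balanced k l; rewrite mulrBl; lra.
by rewrite ler_norml gap andbT lerNl opprB minC gap.
Qed.

Lemma balanced_share_gap (i : N) :
  `|t i - w i / wsum w * \sum_(j : N) t j| <= w i / wmin w.
Proof.
have W_gt0 := wsum_gt0 w_gt0 i; have wmin_pos := wmin_gt0 w_gt0 i.
have lower : (t i - 1) * wsum w <= w i * \sum_j t j.
  rewrite /wsum !mulr_sumr; apply: ler_sum => j _.
  have := t_balanced i j.
  by rewrite ler_pdivrMr ?w_gt0 // mulrAC ler_pdivlMr ?w_gt0 // (mulrC (w i)).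
have upper : w i * \sum_j t j <= (t i + w i / wmin w) * wsum w.
  rewrite /wsum !mulr_sumr; apply: ler_sum => j _.
  have := t_balanced j i.
  rewrite ler_pdivrMr ?w_gt0 // mulrAC ler_pdivlMr ?w_gt0 //.
  have : w i <= w i * (w j / wmin w).
    by apply: ler_peMr; [exact: ltW | rewrite ler_pdivlMr // mul1r wmin_le].
  lra.
have one_le : 1 <= w i / wmin w by rewrite ler_pdivlMr // mul1r wmin_le.
rewrite mulrAC; move: lower upper.
rewrite -(ler_pdivlMr _ _ W_gt0) -(ler_pdivrMr _ _ W_gt0).
rewrite ler_norml; lra.
Qed.

End BalancedShares.

Theorem lemma8 (R : realFieldType) (N M : finType)
    (w : N -> R) (u : N -> M -> R) (r : seq (N * M)) :
  (forall i : N, 0 < w i) ->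
  wps_run w u r ->
  (forall (s : nat) (i j : N), (s <= #|M|)%N ->
     `|(picks r i s)%:R / w i - (picks r j s)%:R / w j|
       <= 1 / Num.min (w i) (w j)) /\
  (forall (s : nat) (i : N), (s <= #|M|)%N ->
     `|(picks r i s)%:R - w i / wsum w * s%:R| <= w i / wmin w).
Proof.
move=> w_gt0 [size_r run].
have balanced s : (s <= #|M|)%N -> forall i j,
    ((picks r i s)%:R - 1) / w i <= (picks r j s)%:R / w j.
  rewrite -size_r => le_s i j.
  by apply: (picks_balanced w_gt0) le_s => pre a x post /run[].
split=> [s i j /balanced bal|s i le_s].
  exact: (balanced_ratio_gap (t := fun k => (picks r k s)%:R) w_gt0 bal).
have -> : s%:R = \sum_(j : N) (picks r j s)%:R :> R.
  by rewrite -natr_sum sum_picks size_r (minn_idPl le_s).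
exact: (balanced_share_gap (t := fun k => (picks r k s)%:R) w_gt0
          (balanced s le_s)).
Qed.
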